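(* For every integer $k\ge1$, $$\frac{B_k}{k!}=n_{(1,\dots,1)},$$ where $(1,\dots,1)$ is the tuple consisting of $k$ entries equal to $1$.
   Context: $B_k$ are the Bernoulli numbers, defined by $\frac{t}{e^t-1}=\sum_{k\ge0}B_k\frac{t^k}{k!}$ (so $B_1=-\tfrac12$). For a tuple $J=(j_1,\dots,j_s)$ of integers $j_i\ge1$, $m_J:=\prod_{i=1}^{s}\frac{1}{j_i+j_{i+1}+\cdots+j_s+1}\cdot\frac{1}{(j_i-1)!}$, and $n_J:=\sum_{J=J_1\|\cdots\|J_l}(-1)^l m_{J_1}\cdots m_{J_l}$, where the sum runs over all ways of writing $J$ as a concatenation $J_1\|\cdots\|J_l$ of $l\ge1$ nonempty tuples. *)

From mathcomp Require Import all_boot all_order all_algebra.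
Set Implicit Arguments. Unset Strict Implicit. Unset Printing Implicit Defensive.
Import Order.TTheory GRing.Theory Num.Theory.
Local Open Scope ring_scope.

(* Bernoulli numbers (convention B_1 = -1/2), defined by the generating
   function t/(e^t-1) = sum_k B_k t^k/k!, read as an identity of formal power
   series: (sum_{n>=0} t^n/(n+1)!) * (sum_k B_k t^k/k!) = 1, i.e. for all m,
     sum_{j=0}^m B_j/j! * 1/(m-j+1)! = [m == 0].
   Solving this triangular system gives B_0 = 1 and, for m >= 1,
     B_m = - m! * sum_{j<m} B_j / (j! (m-j+1)!).
   bern_list n is the list [B_0; ...; B_n]. *)
Fixpoint bern_list (n : nat) : seq rat :=
  match n with
  | 0 => [:: 1]
  | n'.+1 =>
      let L := bern_list n' in
      rcons L (- (n'.+1)`!%:R *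
                 \sum_(j < n'.+1) (nth 0 L j / ((j`!)%:R * ((n'.+2 - j)`!)%:R)))
  end.

Definition bernoulli (k : nat) : rat := nth 0 (bern_list k) k.

Definition bernoulli_gf_identity (B : nat -> rat) : Prop :=
  forall m : nat,
    \sum_(j < m.+1) (B j / (j`!)%:R) / ((m - j).+1`!)%:R = (m == 0%N)%:R.

Definition mJ (J : seq nat) : rat :=
  \prod_(i < size J)
     (1 / ((sumn (drop i J)).+1)%:R * (1 / ((nth 0 J i).-1`!)%:R)).

(* All ways of writing J as a concatenation J_1 || ... || J_l of nonempty
   tuples (for J = [::] this is the single empty decomposition). *)
Fixpoint decomps (T : Type) (J : seq T) : seq (seq (seq T)) :=
  match J with
  | [::] => [:: [::]]
  | x :: J' =>
      flatten [seq (match D with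
                    | [::] => [:: [:: [:: x]]]
                    | P :: D' => [:: [:: x] :: P :: D'; (x :: P) :: D']
                    end) | D <- decomps J']
  end.

Definition nJ (J : seq nat) : rat :=
  \sum_(D <- decomps J) ((-1) ^+ size D * \prod_(P <- D) mJ P).

From mathcomp Require Import all_boot all_order all_algebra.
From mathcomp Require Import ring.
Set Implicit Arguments. Unset Strict Implicit. Unset Printing Implicit Defensive.
Import GRing.Theory Num.Theory.
Local Open Scope ring_scope.

(* Both sides satisfy the same triangular recursion with the same initial value.
   For B_k/k! this is the defining generating-function identity.  For
   n_(1,...,1), split off the first block of each decomposition: if that block
   has length s+1 its weight is m_(1,...,1) = 1/(s+2)!, and the remaining
   blocks decompose the all-ones tuple of length k-s-1, contributing
   -n_(1,...,1) of that length. *)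

Lemma size_bern_list n : size (bern_list n) = n.+1.
Proof. by elim: n => [|n IH] //=; rewrite size_rcons IH. Qed.

Lemma nth_bern_list n j : (j <= n)%N -> nth 0 (bern_list n) j = bernoulli j.
Proof.
move=> /subnK <-; rewrite /bernoulli; elim: (n - j)%N => [|d IH] //=.
by rewrite nth_rcons size_bern_list ltnS leq_addl IH.
Qed.

Lemma bernoulli_div_fact_rec m :
  bernoulli m.+1 / (m.+1)`!%:R =
  - \sum_(j < m.+1) bernoulli j / (j`!)%:R / ((m.+1 - j).+1`!)%:R.
Proof.
rewrite {1}/bernoulli /= nth_rcons size_bern_list ltnn eqxx.
rewrite !mulNr mulrAC divff ?mul1r; last by rewrite pnatr_eq0 -lt0n fact_gt0.
congr (- _); apply: eq_bigr => j _.
have j_le_m : (j <= m)%N by rewrite -ltnS.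
rewrite nth_bern_list // subSn 1?ltnW //.
by rewrite invfM mulrA.
Qed.

Section DecompositionSums.

Variables (T : Type) (R : comPzRingType) (m : seq T -> R).

(* n_J with the first block J_1 weighted by g instead of m, which makes the
   recursion on the first entry of J close up. *)
Definition decomp_sum (g : seq T -> R) (J : seq T) : R :=
  \sum_(D <- decomps J)
     (-1) ^+ size D * g (head [::] D) * \prod_(P <- behead D) m P.

Lemma decomp_sum_nil g : decomp_sum g [::] = g [::].
Proof. by rewrite /decomp_sum /= big_seq1 big_nil mulr1 mul1r. Qed.

Lemma decomp_sum1 x g : decomp_sum g [:: x] = - g [:: x].
Proof. by rewrite /decomp_sum /= big_seq1 big_nil mulr1 expr1 mulN1r. Qed.

Lemma decomps_cons (x : T) (J : seq T) :
  decomps (x :: J) =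
  flatten [seq (match D with
                | [::] => [:: [:: [:: x]]]
                | P :: D' => [:: [:: x] :: P :: D'; (x :: P) :: D']
                end) | D <- decomps J].
Proof. by []. Qed.

Lemma decomps_nonempty (x : T) (J : seq T) :
  all (fun D => ~~ nilp D) (decomps (x :: J)).
Proof. by rewrite decomps_cons; elim: (decomps J) => [|[|P D] L IH] //=. Qed.

(* The first block [:: x] either stands alone or is glued onto the next block. *)
Lemma decomp_sum_cons x y J g :
  decomp_sum g [:: x, y & J] =
  - g [:: x] * decomp_sum m (y :: J) + decomp_sum (fun P => g (x :: P)) (y :: J).
Proof.
rewrite /decomp_sum {1}(decomps_cons x) big_flatten big_map mulr_sumr -big_split.
elim: (decomps (y :: J)) (decomps_nonempty y J) => [|D L IH].
  by rewrite !big_nil.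
move=> /andP [DN LN]; rewrite !big_cons IH //; congr (_ + _).
case: D DN => [//|P D] _ /=; rewrite big_cons big_seq1 /= big_cons exprS; ring.
Qed.

Lemma decomp_sum_nseq x k g : m [::] = 1 -> (0 < k)%N ->
  decomp_sum g (nseq k x) =
  - \sum_(s < k) g (nseq s.+1 x) * decomp_sum m (nseq (k - s.+1) x).
Proof.
move=> m_nil; elim: k g => [//|[|k] IH] g _.
  by rewrite decomp_sum1 big_ord1 decomp_sum_nil m_nil mulr1.
rewrite [nseq _ _]/= decomp_sum_cons -[_ :: nseq _ _]/(nseq k.+1 x).
by rewrite (IH (fun P => g (x :: P))) // [in RHS]big_ord_recl opprD mulNr.
Qed.

End DecompositionSums.

Lemma nJ_decomp_sum J : nJ J = decomp_sum mJ mJ J.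
Proof.
apply: eq_bigr => [[|P D]] _ /=; last by rewrite big_cons mulrA.
by rewrite big_nil /mJ big_ord0 !mulr1.
Qed.

Lemma mJ_nseq1 s : mJ (nseq s 1%N) = ((s.+1)`!%:R)^-1.
Proof.
rewrite /mJ size_nseq.
under eq_bigr => i _ do
  rewrite drop_nseq nth_nseq ltn_ord sumn_nseq mul1n /= mulr1 div1r.
elim: s => [|s IH]; first by rewrite big_ord0 invr1.
by rewrite big_ord_recl subn0 factS natrM invfM -IH.
Qed.

Lemma nJ_nseq1_rec m :
  nJ (nseq m.+1 1%N) =
  - \sum_(j < m.+1) nJ (nseq j 1%N) / ((m.+1 - j).+1`!)%:R.
Proof.
rewrite nJ_decomp_sum decomp_sum_nseq ?(mJ_nseq1 0) ?invr1 //.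
rewrite (reindex_inj rev_ord_inj) /=.
congr (- _); apply: eq_bigr => j _.
have j_le_m : (j <= m)%N by rewrite -ltnS.
have -> : (m.+1 - j = (m - j).+1)%N by rewrite subSn.
rewrite -[1%N :: _]/(nseq (m - j).+1 1%N) mJ_nseq1 subSS subSS subKn //.
by rewrite nJ_decomp_sum mulrC.
Qed.

Lemma bernoulli_div_fact_nJ k : bernoulli k / (k`!)%:R = nJ (nseq k 1%N).
Proof.
elim/ltn_ind: k => [[|k]] IH.
  by rewrite nJ_decomp_sum decomp_sum_nil (mJ_nseq1 0) /bernoulli /= divr1 invr1.
rewrite bernoulli_div_fact_rec nJ_nseq1_rec; congr (- _).
by apply: eq_bigr => j _; rewrite IH.
Qed.

(* The identity also holds for k = 0. *)
Theorem mainTheorem8 (k : nat) (hk : (1 <= k)%N) :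
  bernoulli k / (k`!)%:R = nJ (nseq k 1%N).
Proof. exact: bernoulli_div_fact_nJ. Qed.
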